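(* Let $\mathcal{W}$ be a weakly exact structure on an additive category $\mathcal{A}$. (1) If $A\xrightarrow{i}B\xrightarrow{j}C$ are morphisms in $\mathcal{A}$ such that $i$ has a cokernel and $ji$ is an admissible monic of $\mathcal{W}$, then $i$ is an admissible monic of $\mathcal{W}$. (2) If $X\xrightarrow{f}Y\xrightarrow{g}Z$ are morphisms in $\mathcal{A}$ such that $g$ has a kernel and $gf$ is an admissible epic of $\mathcal{W}$, then $g$ is an admissible epic of $\mathcal{W}$.
   Context: Let $\mathcal{A}$ be an additive category. A kernel-cokernel pair (short exact sequence) is a pair of composable morphisms $A\xrightarrow{i}B\xrightarrow{d}C$ with $i$ a kernel of $d$ and $d$ a cokernel of $i$. A weakly exact structure on $\mathcal{A}$ is a class $\mathcal{W}$ of kernel-cokernel pairs, closed under isomorphisms of sequences and under finite direct sums of sequences, such that, calling $i$ an admissible monic (resp. $d$ an admissible epic) if $(i,d)\in\mathcal{W}$ for some $d$ (resp. some $i$): (E0) $1_A$ is an admissible monic for every object $A$; (E0)$^{op}$ $1_A$ is an admissible epic for every object $A$; (E2) for every admissible monic $i:A\to B$ and every morphism $t:A\to C$ the pushout of $i$ along $t$ exists and the resulting morphism $C\to S$ is an admissible monic; (E2)$^{op}$ for every admissible epic $h:A\to C$ and every morphism $t:B\to C$ the pullback of $h$ along $t$ exists and the resulting morphism $P\to B$ is an admissible epic. *)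

From HB Require Import structures.
From mathcomp Require Import all_boot all_algebra.
Set Implicit Arguments. Unset Strict Implicit. Unset Printing Implicit Defensive.
Import GRing.Theory.
Local Open Scope ring_scope.

Record PreAdd := {
  Obj :> Type;
  Mor : Obj -> Obj -> zmodType;
  mcomp : forall A B C : Obj, Mor B C -> Mor A B -> Mor A C;
  idm : forall A : Obj, Mor A A;
  compA : forall (A B C D : Obj) (h : Mor C D) (g : Mor B C) (f : Mor A B),
      mcomp h (mcomp g f) = mcomp (mcomp h g) f;
  comp1m : forall (A B : Obj) (f : Mor A B), mcomp (idm B) f = f;
  compm1 : forall (A B : Obj) (f : Mor A B), mcomp f (idm A) = f;
  compDl : forall (A B C : Obj) (g1 g2 : Mor B C) (f : Mor A B),
      mcomp (g1 + g2) f = mcomp g1 f + mcomp g2 f;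
  compDr : forall (A B C : Obj) (g : Mor B C) (f1 f2 : Mor A B),
      mcomp g (f1 + f2) = mcomp g f1 + mcomp g f2
}.
Arguments mcomp {p A B C}.
Arguments idm {p}.

Section Defs.
Variable C : PreAdd.

Definition is_zero_obj (Z : C) : Prop :=
  forall X : C, (forall f g : Mor X Z, f = g) /\ (forall f g : Mor Z X, f = g).

Definition is_biprod (A1 A2 S : C) (e1 : Mor A1 S) (e2 : Mor A2 S)
    (p1 : Mor S A1) (p2 : Mor S A2) : Prop :=
  [/\ mcomp p1 e1 = idm A1, mcomp p2 e2 = idm A2, mcomp p1 e2 = 0, mcomp p2 e1 = 0
    & mcomp e1 p1 + mcomp e2 p2 = idm S].

Definition is_additive : Prop :=
  (exists Z : C, is_zero_obj Z) /\
  (forall A1 A2 : C, exists (S : C) (e1 : Mor A1 S) (e2 : Mor A2 S)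
      (p1 : Mor S A1) (p2 : Mor S A2), is_biprod e1 e2 p1 p2).

Definition is_kernel (A B D : C) (i : Mor A B) (d : Mor B D) : Prop :=
  mcomp d i = 0 /\
  forall (X : C) (t : Mor X B), mcomp d t = 0 -> exists! u : Mor X A, mcomp i u = t.

Definition is_cokernel (A B D : C) (i : Mor A B) (d : Mor B D) : Prop :=
  mcomp d i = 0 /\
  forall (X : C) (t : Mor B X), mcomp t i = 0 -> exists! u : Mor D X, mcomp u d = t.

Definition has_kernel (B D : C) (d : Mor B D) : Prop :=
  exists (A : C) (i : Mor A B), is_kernel i d.

Definition has_cokernel (A B : C) (i : Mor A B) : Prop :=
  exists (D : C) (d : Mor B D), is_cokernel i d.

Definition kc_pair (A B D : C) (i : Mor A B) (d : Mor B D) : Prop :=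
  is_kernel i d /\ is_cokernel i d.

Definition is_iso (A B : C) (f : Mor A B) : Prop :=
  exists g : Mor B A, mcomp g f = idm A /\ mcomp f g = idm B.

Definition SeqClass := forall A B D : C, Mor A B -> Mor B D -> Prop.

Definition adm_monic (W : SeqClass) (A B : C) (i : Mor A B) : Prop :=
  exists (D : C) (d : Mor B D), W A B D i d.

Definition adm_epic (W : SeqClass) (B D : C) (d : Mor B D) : Prop :=
  exists (A : C) (i : Mor A B), W A B D i d.

Definition dsum_mor (A1 A2 SA B1 B2 SB : C)
    (pA1 : Mor SA A1) (pA2 : Mor SA A2) (eB1 : Mor B1 SB) (eB2 : Mor B2 SB)
    (f : Mor A1 B1) (g : Mor A2 B2) : Mor SA SB :=
  mcomp eB1 (mcomp f pA1) + mcomp eB2 (mcomp g pA2).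

Definition is_pushout (A B D S : C) (i : Mor A B) (t : Mor A D)
    (s : Mor B S) (j : Mor D S) : Prop :=
  mcomp s i = mcomp j t /\
  forall (X : C) (u : Mor B X) (v : Mor D X), mcomp u i = mcomp v t ->
    exists! w : Mor S X, mcomp w s = u /\ mcomp w j = v.

Definition is_pullback (A B D P : C) (h : Mor A D) (t : Mor B D)
    (q : Mor P A) (k : Mor P B) : Prop :=
  mcomp h q = mcomp t k /\
  forall (X : C) (u : Mor X A) (v : Mor X B), mcomp h u = mcomp t v ->
    exists! w : Mor X P, mcomp q w = u /\ mcomp k w = v.

Definition weakly_exact (W : SeqClass) : Prop :=
  (forall (A B D : C) (i : Mor A B) (d : Mor B D), W A B D i d -> kc_pair i d) /\
  (forall (A B D A' B' D' : C) (i : Mor A B) (d : Mor B D)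
      (i' : Mor A' B') (d' : Mor B' D') (a : Mor A A') (b : Mor B B') (c : Mor D D'),
      W A B D i d -> is_iso a -> is_iso b -> is_iso c ->
      mcomp b i = mcomp i' a -> mcomp c d = mcomp d' b -> W A' B' D' i' d') /\
  (forall (A1 B1 D1 A2 B2 D2 SA SB SD : C)
      (i1 : Mor A1 B1) (d1 : Mor B1 D1) (i2 : Mor A2 B2) (d2 : Mor B2 D2)
      (eA1 : Mor A1 SA) (eA2 : Mor A2 SA) (pA1 : Mor SA A1) (pA2 : Mor SA A2)
      (eB1 : Mor B1 SB) (eB2 : Mor B2 SB) (pB1 : Mor SB B1) (pB2 : Mor SB B2)
      (eD1 : Mor D1 SD) (eD2 : Mor D2 SD) (pD1 : Mor SD D1) (pD2 : Mor SD D2),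
      W A1 B1 D1 i1 d1 -> W A2 B2 D2 i2 d2 ->
      is_biprod eA1 eA2 pA1 pA2 -> is_biprod eB1 eB2 pB1 pB2 ->
      is_biprod eD1 eD2 pD1 pD2 ->
      W SA SB SD (dsum_mor pA1 pA2 eB1 eB2 i1 i2) (dsum_mor pB1 pB2 eD1 eD2 d1 d2)) /\
  (forall A : C, adm_monic W (idm A)) /\
  (forall A : C, adm_epic W (idm A)) /\
  (forall (A B D : C) (i : Mor A B) (t : Mor A D), adm_monic W i ->
      exists (S : C) (s : Mor B S) (j : Mor D S), is_pushout i t s j /\ adm_monic W j) /\
  (forall (A B D : C) (h : Mor A D) (t : Mor B D), adm_epic W h ->
      exists (P : C) (q : Mor P A) (k : Mor P B), is_pullback h t q k /\ adm_epic W k).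

End Defs.

(** Part (1): let i : A -> B have a cokernel d : B -> Q and let j o i be an
  admissible monic with cokernel e : D -> E.  Push j o i out along i; the
  pushout object is the biproduct D (+) Q, and the new admissible monic is
  n = (j, d) : B -> D (+) Q.  Since n is monic, j and d are jointly monic,
  from which i is a kernel of d.  Next pull e back along the map
  g : Q -> E induced by e o j; the pullback P embeds into D (+) Q and its
  leg k : P -> Q is an admissible epic.  Comparing with n, which is the
  kernel of its cokernel, the induced map B -> P is an isomorphism turning
  d into k, so (i, d) is isomorphic to the kernel sequence of k and lies in W.

  Part (2) is the dual: the opposite of a weakly exact structure is weakly
  exact, and part (1) in the opposite category is exactly part (2). *)
From Pilot Require Import Defs.
From mathcomp Require Import all_boot all_algebra.
Set Implicit Arguments. Unset Strict Implicit. Unset Printing Implicit Defensive.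
Import GRing.Theory.
Local Open Scope ring_scope.

Local Notation mcompA := Defs.compA.

Section Preadditive.
Variable C : PreAdd.

Lemma comp0l (A B D : C) (f : Mor A B) : mcomp (0 : Mor B D) f = 0.
Proof. by apply: (addrI (mcomp 0 f)); rewrite -compDl !addr0. Qed.

Lemma comp0r (A B D : C) (g : Mor B D) : mcomp g (0 : Mor A B) = 0.
Proof. by apply: (addrI (mcomp g 0)); rewrite -compDr !addr0. Qed.

Lemma compNl (A B D : C) (g : Mor B D) (f : Mor A B) :
  mcomp (- g) f = - mcomp g f.
Proof. by apply: (addrI (mcomp g f)); rewrite -compDl !subrr comp0l. Qed.

Lemma compNr (A B D : C) (g : Mor B D) (f : Mor A B) :
  mcomp g (- f) = - mcomp g f.
Proof. by apply: (addrI (mcomp g f)); rewrite -compDr !subrr comp0r. Qed.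

Lemma compBl (A B D : C) (g1 g2 : Mor B D) (f : Mor A B) :
  mcomp (g1 - g2) f = mcomp g1 f - mcomp g2 f.
Proof. by rewrite compDl compNl. Qed.

Lemma compBr (A B D : C) (g : Mor B D) (f1 f2 : Mor A B) :
  mcomp g (f1 - f2) = mcomp g f1 - mcomp g f2.
Proof. by rewrite compDr compNr. Qed.

Lemma monic_of_kills0 (A B : C) (m : Mor A B) :
  (forall (X : C) (u : Mor X A), mcomp m u = 0 -> u = 0) ->
  forall (X : C) (u v : Mor X A), mcomp m u = mcomp m v -> u = v.
Proof.
move=> m0 X u v muv; apply/eqP; rewrite -subr_eq0; apply/eqP/m0.
by rewrite compBr muv subrr.
Qed.

Lemma kernel_monic (A B D : C) (i : Mor A B) (d : Mor B D) : is_kernel i d ->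
  forall (X : C) (u v : Mor X A), mcomp i u = mcomp i v -> u = v.
Proof.
move=> [di univ] X u v iuv.
have diu : mcomp d (mcomp i u) = 0 by rewrite mcompA di comp0l.
have [w [_ w_uniq]] := univ X _ diu.
by rewrite -(w_uniq u erefl) (w_uniq v (esym iuv)).
Qed.

Lemma cokernel_epic (A B D : C) (i : Mor A B) (d : Mor B D) : is_cokernel i d ->
  forall (X : C) (u v : Mor D X), mcomp u d = mcomp v d -> u = v.
Proof.
move=> [di univ] X u v udv.
have udi : mcomp (mcomp u d) i = 0 by rewrite -mcompA di comp0r.
have [w [_ w_uniq]] := univ X _ udi.
by rewrite -(w_uniq u erefl) (w_uniq v (esym udv)).
Qed.

Lemma pushout_jointly_epic (A B D S : C) (i : Mor A B) (t : Mor A D)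
    (s : Mor B S) (j : Mor D S) : is_pushout i t s j ->
  forall (X : C) (u v : Mor S X),
    mcomp u s = mcomp v s -> mcomp u j = mcomp v j -> u = v.
Proof.
move=> [sq univ] X u v us uj.
have usq : mcomp (mcomp u s) i = mcomp (mcomp u j) t by rewrite -!mcompA sq.
have [w [_ w_uniq]] := univ X _ _ usq.
by rewrite -(w_uniq u (conj erefl erefl)) (w_uniq v (conj (esym us) (esym uj))).
Qed.

Lemma pullback_jointly_monic (A B D P : C) (h : Mor A D) (t : Mor B D)
    (q : Mor P A) (k : Mor P B) : is_pullback h t q k ->
  forall (X : C) (u v : Mor X P),
    mcomp q u = mcomp q v -> mcomp k u = mcomp k v -> u = v.
Proof.
move=> [sq univ] X u v qu ku.
have usq : mcomp h (mcomp q u) = mcomp t (mcomp k u) by rewrite !mcompA sq.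
have [w [_ w_uniq]] := univ X _ _ usq.
by rewrite -(w_uniq u (conj erefl erefl)) (w_uniq v (conj (esym qu) (esym ku))).
Qed.

Lemma biprod_proj_pair (A1 A2 S X : C) (e1 : Mor A1 S) (e2 : Mor A2 S)
    (p1 : Mor S A1) (p2 : Mor S A2) (a1 : Mor X A1) (a2 : Mor X A2) :
  is_biprod e1 e2 p1 p2 ->
  mcomp p1 (mcomp e1 a1 + mcomp e2 a2) = a1 /\
  mcomp p2 (mcomp e1 a1 + mcomp e2 a2) = a2.
Proof.
case=> p1e1 p2e2 p1e2 p2e1 _.
by rewrite !compDr !mcompA p1e1 p2e2 p1e2 p2e1 !comp0l !comp1m addr0 add0r.
Qed.

Lemma pullback_pairing_monic (A1 A2 D P S : C) (h : Mor A1 D) (t : Mor A2 D)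
    (q : Mor P A1) (k : Mor P A2) (e1 : Mor A1 S) (e2 : Mor A2 S)
    (p1 : Mor S A1) (p2 : Mor S A2) :
  is_pullback h t q k -> is_biprod e1 e2 p1 p2 ->
  forall (X : C) (u v : Mor X P),
    mcomp (mcomp e1 q + mcomp e2 k) u = mcomp (mcomp e1 q + mcomp e2 k) v -> u = v.
Proof.
move=> pb bp; apply: monic_of_kills0 => X u.
rewrite compDl -!mcompA => pair0.
have [qu ku] := biprod_proj_pair (mcomp q u) (mcomp k u) bp.
apply: (pullback_jointly_monic pb); rewrite !comp0r.
- by rewrite -qu pair0 comp0r.
- by rewrite -ku pair0 comp0r.
Qed.

Lemma pushout_along_factor (A B D Q S : C) (i : Mor A B) (j : Mor B D)
    (d : Mor B Q) (s : Mor D S) (n : Mor B S) :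
  is_cokernel i d -> is_pushout (mcomp j i) i s n ->
  exists (tau : Mor Q S) (rho : Mor S D) (sig : Mor S Q),
    is_biprod s tau rho sig /\ n = mcomp s j + mcomp tau d.
Proof.
move=> coker po; have [di d_univ] := coker; have [sq po_univ] := po.
have d_epic := cokernel_epic coker.
have [rho [[rho_s rho_n] _]] : exists! rho : Mor S D,
    mcomp rho s = idm D /\ mcomp rho n = j by apply: po_univ; rewrite comp1m.
have [sig [[sig_s sig_n] _]] : exists! sig : Mor S Q,
    mcomp sig s = 0 /\ mcomp sig n = d by apply: po_univ; rewrite comp0l di.
have [tau [tau_d _]] : exists! tau : Mor Q S, mcomp tau d = n - mcomp s j.
  by apply: d_univ; rewrite compBl -mcompA sq subrr.
have n_pair : n = mcomp s j + mcomp tau d by rewrite tau_d addrC subrK.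
exists tau, rho, sig; split=> //; split=> //.
- by apply: d_epic; rewrite -mcompA tau_d compBr sig_n mcompA sig_s comp0l subr0 comp1m.
- by apply: d_epic; rewrite -mcompA tau_d compBr rho_n mcompA rho_s comp1m subrr comp0l.
- apply: (pushout_jointly_epic po); rewrite comp1m compDl -!mcompA.
    by rewrite rho_s sig_s compm1 comp0r addr0.
  by rewrite rho_n sig_n.
Qed.

Lemma kernel_of_cokernel (A B D E Q : C) (i : Mor A B) (j : Mor B D)
    (e : Mor D E) (d : Mor B Q) :
  is_kernel (mcomp j i) e -> is_cokernel i d ->
  (forall (X : C) (b : Mor X B), mcomp j b = 0 -> mcomp d b = 0 -> b = 0) ->
  is_kernel i d.
Proof.
move=> ker coker jd_monic; have [eji e_univ] := ker; have [di d_univ] := coker.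
have [g [g_d _]] : exists! g : Mor Q E, mcomp g d = mcomp e j.
  by apply: d_univ; rewrite -mcompA eji.
split=> // X t dt.
have ejt : mcomp e (mcomp j t) = 0 by rewrite mcompA -g_d -mcompA dt comp0r.
have [u [ji_u u_uniq]] := e_univ X _ ejt.
exists u; split=> [|u' iu']; last by apply: u_uniq; rewrite -mcompA iu'.
apply/eqP; rewrite -subr_eq0; apply/eqP/jd_monic.
- by rewrite compBr mcompA ji_u subrr.
- by rewrite compBr mcompA di comp0l dt subrr.
Qed.

Lemma factor_through_kernel_iso (B P S T : C) (n : Mor B S) (c : Mor S T)
    (m : Mor P S) (beta : Mor B P) :
  is_kernel n c ->
  (forall (X : C) (u v : Mor X P), mcomp m u = mcomp m v -> u = v) ->
  mcomp c m = 0 -> n = mcomp m beta -> is_iso beta.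
Proof.
move=> ker m_monic cm n_m; have [_ c_univ] := ker.
have [gam [n_gam _]] := c_univ P m cm.
exists gam; split.
- by apply: (kernel_monic ker); rewrite compm1 mcompA n_gam.
- by apply: m_monic; rewrite compm1 mcompA -n_m n_gam.
Qed.

End Preadditive.

Lemma W_of_isomorphic_kernel (C : PreAdd) (W : SeqClass C) (HW : weakly_exact W)
    (K P A B Q : C) (ka : Mor K P) (k : Mor P Q)
    (i : Mor A B) (d : Mor B Q) (beta : Mor B P) :
  W K P Q ka k -> is_kernel i d -> is_iso beta -> mcomp k beta = d -> W A B Q i d.
Proof.
move=> Wk ker_i [gam [gam_beta beta_gam]] k_beta.
have [Hkc [Hiso _]] := HW; have [ker_ka _] := Hkc _ _ _ _ _ Wk.
have d_gam : mcomp d gam = k by rewrite -k_beta -mcompA beta_gam compm1.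
have [a [i_a _]] : exists! a : Mor K A, mcomp i a = mcomp gam ka.
  by apply: ker_i.2; rewrite mcompA d_gam ker_ka.1.
have [a' [ka_a' _]] : exists! a' : Mor A K, mcomp ka a' = mcomp beta i.
  by apply: ker_ka.2; rewrite mcompA k_beta ker_i.1.
apply: (Hiso _ _ _ _ _ _ _ _ _ _ a gam (idm Q) Wk) => //.
- exists a'; split.
  + by apply: (kernel_monic ker_ka); rewrite compm1 mcompA ka_a'
      -mcompA i_a mcompA beta_gam comp1m.
  + by apply: (kernel_monic ker_i); rewrite compm1 mcompA i_a -mcompA ka_a'
      mcompA gam_beta comp1m.
- by exists beta.
- by exists (idm Q); rewrite comp1m.
- by rewrite comp1m.
Qed.

Theorem admissible_monic_of_composite (C : PreAdd) (W : SeqClass C)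
    (HW : weakly_exact W) (A B D : C) (i : Mor A B) (j : Mor B D) :
  has_cokernel i -> adm_monic W (mcomp j i) -> adm_monic W i.
Proof.
move=> [Q [d coker_i]] adm_ji; have [E [e W_ji]] := adm_ji.
have [Hkc [_ [_ [_ [_ [HE2 HE2op]]]]]] := HW.
have [ker_ji coker_ji] := Hkc _ _ _ _ _ W_ji.
(* push j o i out along i: the new admissible monic n = (j, d) *)
have [S [s [n [po [T [c W_n]]]]]] := HE2 _ _ _ _ i adm_ji.
have [ker_n _] := Hkc _ _ _ _ _ W_n.
have [tau [rho [sig [bp n_pair]]]] := pushout_along_factor coker_i po.
have tau_d : mcomp tau d = n - mcomp s j by rewrite n_pair addrAC subrr add0r.
have ker_i : is_kernel i d.
  apply: (kernel_of_cokernel ker_ji coker_i) => X b jb db.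
  apply: (kernel_monic ker_n).
  by rewrite comp0r n_pair compDl -!mcompA jb db !comp0r addr0.
have [g [g_d _]] : exists! g : Mor Q E, mcomp g d = mcomp e j.
  by apply: coker_i.2; rewrite -mcompA ker_ji.1.
have adm_e : adm_epic W e by exists A, (mcomp j i).
have [P [q [k [pb [K [ka W_k]]]]]] := HE2op _ _ _ e g adm_e.
have [beta [[q_beta k_beta] _]] : exists! beta : Mor B P,
    mcomp q beta = j /\ mcomp k beta = d by apply: pb.2; rewrite g_d.
(* c factors as h o (e, -g) on D (+) Q, hence kills the pullback *)
have [h [h_e _]] : exists! h : Mor E T, mcomp h e = mcomp c s.
  by apply: coker_ji.2; rewrite -mcompA po.1 mcompA ker_n.1 comp0l.
have c_tau : mcomp c tau = - mcomp h g.
  apply: (cokernel_epic coker_i).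
  by rewrite -mcompA tau_d compBr ker_n.1 sub0r compNl -mcompA g_d !mcompA h_e.
have c_pair : mcomp c (mcomp s q + mcomp tau k) = 0.
  by rewrite compDr !mcompA c_tau -h_e compNl -!mcompA pb.1 subrr.
have beta_iso : is_iso beta.
  apply: (factor_through_kernel_iso ker_n (pullback_pairing_monic pb bp) c_pair).
  by rewrite n_pair compDl -!mcompA q_beta k_beta.
exists Q, d; exact: (W_of_isomorphic_kernel HW W_k ker_i beta_iso k_beta).
Qed.

Definition opp_cat (C : PreAdd) : PreAdd :=
  @Build_PreAdd (Obj C) (fun A B => Mor B A) (fun A B D g f => mcomp f g)
    (fun A => idm A)
    (fun A B D E h g f => esym (Defs.compA f g h))
    (fun A B f => compm1 f) (fun A B f => comp1m f)
    (fun A B D g1 g2 f => compDr f g1 g2) (fun A B D g f1 f2 => compDl f1 f2 g).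

Definition W_op (C : PreAdd) (W : SeqClass C) : SeqClass (opp_cat C) :=
  fun A B D i d => W D B A d i.

Lemma iso_square_flip (C : PreAdd) (X Y X' Y' : C) (x : Mor X Y) (y : Mor X' Y')
    (u : Mor X' X) (u' : Mor X X') (v : Mor Y' Y) (v' : Mor Y Y') :
  mcomp u u' = idm X -> mcomp v' v = idm Y' ->
  mcomp x u = mcomp v y -> mcomp v' x = mcomp y u'.
Proof.
move=> u_u' v'_v xu_vy.
by rewrite -[LHS]compm1 -u_u' !mcompA -(mcompA v') xu_vy mcompA v'_v comp1m.
Qed.

Lemma biprod_op (C : PreAdd) (A1 A2 S : C) (e1 : Mor S A1) (e2 : Mor S A2)
    (p1 : Mor A1 S) (p2 : Mor A2 S) :
  @is_biprod (opp_cat C) A1 A2 S e1 e2 p1 p2 -> is_biprod p1 p2 e1 e2.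
Proof. by case. Qed.

Lemma dsum_mor_op (C : PreAdd) (A1 A2 SA B1 B2 SB : C)
    (p1 : Mor A1 SA) (p2 : Mor A2 SA) (e1 : Mor SB B1) (e2 : Mor SB B2)
    (f : Mor B1 A1) (g : Mor B2 A2) :
  @dsum_mor (opp_cat C) A1 A2 SA B1 B2 SB p1 p2 e1 e2 f g = dsum_mor e1 e2 p1 p2 f g.
Proof. by rewrite /dsum_mor /= !mcompA. Qed.

(** The opposite of a weakly exact structure is weakly exact: kernels and
   cokernels, pushouts and pullbacks, (E0) and (E0)^op, (E2) and (E2)^op are
   exchanged. *)
Lemma weakly_exact_op (C : PreAdd) (W : SeqClass C) :
  weakly_exact W -> weakly_exact (W_op W).
Proof.
move=> [Hkc [Hiso [Hsum [HE0 [HE0op [HE2 HE2op]]]]]].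
split; last split; last split; last split; last split; last split.
- by move=> A B D i d /Hkc [].
- move=> A B D A' B' D' i d i' d' a b c W_id [a' [a_a' a'_a]] [b' [b_b' b'_b]]
    [c' [c_c' c'_c]] b_i c_d.
  simpl in *.
  apply: (Hiso _ _ _ _ _ _ d i d' i' c' b' a' W_id).
  + by exists c.
  + by exists b.
  + by exists a.
  + exact: iso_square_flip c_c' b'_b c_d.
  + exact: iso_square_flip b_b' a'_a b_i.
- move=> A1 B1 D1 A2 B2 D2 SA SB SD i1 d1 i2 d2 eA1 eA2 pA1 pA2 eB1 eB2 pB1 pB2
    eD1 eD2 pD1 pD2 W_1 W_2 /biprod_op bpA /biprod_op bpB /biprod_op bpD.
  rewrite /W_op !dsum_mor_op.
  exact: Hsum W_1 W_2 bpD bpB bpA.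
- exact: HE0op.
- exact: HE0.
- by move=> A B D i t; apply: HE2op.
- by move=> A B D h t; apply: HE2.
Qed.

Theorem mainTheorem3 (C : PreAdd) (HC : is_additive C) (W : SeqClass C)
    (HW : weakly_exact W) :
  (forall (A B D : C) (i : Mor A B) (j : Mor B D),
      has_cokernel i -> adm_monic W (mcomp j i) -> adm_monic W i) /\
  (forall (X Y Z : C) (f : Mor X Y) (g : Mor Y Z),
      has_kernel g -> adm_epic W (mcomp g f) -> adm_epic W g).
Proof.
split; first exact: admissible_monic_of_composite.
(* part (2) is part (1) in the opposite category *)
move=> X Y Z f g.
exact: (@admissible_monic_of_composite (opp_cat C) (W_op W) (weakly_exact_op HW) Z Y X g f).
Qed.
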